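(* Let $I$ be a composition of $n$. For every $1\le i\le n-1$ and every $D\subseteq\{1,\dots,n\}$, $$T_i\,c_D\epsilon_I=\alpha(i,I,D)\,c_D\epsilon_I+\sum_{D'<_I D}\beta_{D'}\,c_{D'}\epsilon_I$$ for some scalars $\beta_{D'}$. Here $\alpha(i,I,D)\in\{0,-1\}$, and $\alpha(i,I,D)=-1$ exactly when either ($i+1\in D$ and $i\notin\operatorname{Des}(I)$) or ($i\notin D$ and $i\in\operatorname{Des}(I)$).
   Context: For a composition $I=(i_1,\dots,i_r)$ of $n$, $\operatorname{Des}(I)=\{i_1,i_1+i_2,\dots,i_1+\cdots+i_{r-1}\}\subseteq[1,n-1]$. $H_n(0)$ is the complex algebra generated by $T_1,\dots,T_{n-1}$ with $T_i^2=-T_i$, $T_iT_j=T_jT_i$ ($|i-j|>1$), and $T_iT_{i+1}T_i=T_{i+1}T_iT_{i+1}$. $Cl_n$ is generated by $c_1,\dots,c_n$ with $c_ic_j=-c_jc_i$ ($i\ne j$) and $c_i^2=-1$; for $D=\{d_1<\dots<d_k\}$, $c_D=c_{d_1}\cdots c_{d_k}$. $HCl_n(0)$ is the complex algebra generated by the $T_i$ and the $c_j$, with these relations together with $T_ic_j=c_jT_i$ ($j\ne i,i+1$), $T_ic_i=c_{i+1}T_i$, and $(T_i+1)c_{i+1}=c_i(T_i+1)$. $S_I=\mathbb{C}\epsilon_I$ is the one-dimensional $H_n(0)$-module with $T_j\epsilon_I=-\epsilon_I$ if $j\in\operatorname{Des}(I)$ and $T_j\epsilon_I=0$ otherwise.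 $M_I=HCl_n(0)\otimes_{H_n(0)}S_I$, which has basis $(c_D\epsilon_I)_{D\subseteq\{1,\dots,n\}}$. The partial order $\le_I$ on subsets of $\{1,\dots,n\}$ is the reflexive–transitive closure of the relations $D'\lessdot D$, which hold when, for some $1\le i\le n-1$, one of the following is true: (a) $i\notin\operatorname{Des}(I)$, $i\notin D$, $i+1\in D$, and $D'=(D\setminus\{i+1\})\cup\{i\}$; (b) $i\notin\operatorname{Des}(I)$, $i,i+1\in D$, and $D'=D\setminus\{i,i+1\}$; (c) $i\in\operatorname{Des}(I)$, $i\in D$, $i+1\notin D$, and $D'=(D\setminus\{i\})\cup\{i+1\}$; (d) $i\in\operatorname{Des}(I)$, $i,i+1\in D$, and $D'=D\setminus\{i,i+1\}$. We write $D'<_ID$ for $D'\le_ID$ with $D'\ne D$. *)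

From HB Require Import structures.
From mathcomp Require Import all_boot all_order all_algebra.
From mathcomp Require Import finmap.
From mathcomp Require Import complex.
From mathcomp Require Import Rstruct.
From Stdlib Require Reals.

Set Implicit Arguments.
Unset Strict Implicit.
Unset Printing Implicit Defensive.

Import Order.TTheory GRing.Theory Num.Theory.
Local Open Scope ring_scope.

Definition CC : Type := complex Rdefinitions.R.

Definition is_composition (n : nat) (I : seq nat) : Prop :=
  all (fun k => (0 < k)%N) I /\ sumn I = n.

Definition des (I : seq nat) : seq nat :=
  [seq sumn (take k I) | k <- iota 1 (size I).-1].

Definition cD (V : Type) (c : nat -> V -> V) (D : {fset nat}) (v : V) : V :=
  foldr (fun j w => c j w) v (sort leq (enum_fset D)).

Inductive coverI (I : seq nat) : {fset nat} -> {fset nat} -> Prop :=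
| coverI_a : forall (i : nat) (D : {fset nat}), (1 <= i <= (sumn I).-1)%N ->
    i \notin des I -> i \notin D -> i.+1 \in D ->
    coverI I ((D `\ i.+1) `|` [fset i])%fset D
| coverI_b : forall (i : nat) (D : {fset nat}), (1 <= i <= (sumn I).-1)%N ->
    i \notin des I -> i \in D -> i.+1 \in D ->
    coverI I (D `\` [fset i; i.+1])%fset D
| coverI_c : forall (i : nat) (D : {fset nat}), (1 <= i <= (sumn I).-1)%N ->
    i \in des I -> i \in D -> i.+1 \notin D ->
    coverI I ((D `\ i) `|` [fset i.+1])%fset D
| coverI_d : forall (i : nat) (D : {fset nat}), (1 <= i <= (sumn I).-1)%N ->
    i \in des I -> i \in D -> i.+1 \in D ->
    coverI I (D `\` [fset i; i.+1])%fset D.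
(* For a composition I of n, sumn I = n, so 1 <= i <= n-1. *)

Inductive leI (I : seq nat) : {fset nat} -> {fset nat} -> Prop :=
| leI_refl : forall D, leI I D D
| leI_step : forall D'' D' D, coverI I D'' D' -> leI I D' D -> leI I D'' D.

Definition ltI (I : seq nat) (D' D : {fset nat}) : Prop := leI I D' D /\ D' <> D.

Definition alpha (i : nat) (I : seq nat) (D : {fset nat}) : CC :=
  if ((i.+1 \in D) && (i \notin des I)) || ((i \notin D) && (i \in des I))
  then -1 else 0.

(* A left HCl_n(0)-module structure on a C-vector space V, given by the
   actions of the generators T_i (1 <= i <= n-1) and c_j (1 <= j <= n). *)
Definition HCl_module (n : nat) (V : lmodType CC)
    (T c : nat -> V -> V) : Prop :=
  (forall i (a : CC) (u v : V), T i (a *: u + v) = a *: T i u + T i v) /\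
  (forall j (a : CC) (u v : V), c j (a *: u + v) = a *: c j u + c j v) /\
  (forall i v, (1 <= i <= n.-1)%N -> T i (T i v) = - T i v) /\
  (forall i j v, (1 <= i <= n.-1)%N -> (1 <= j <= n.-1)%N ->
     (i.+1 < j)%N \/ (j.+1 < i)%N -> T i (T j v) = T j (T i v)) /\
  (forall i v, (1 <= i)%N -> (i.+1 <= n.-1)%N ->
     T i (T i.+1 (T i v)) = T i.+1 (T i (T i.+1 v))) /\
  (forall i j v, (1 <= i <= n)%N -> (1 <= j <= n)%N -> i <> j ->
     c i (c j v) = - c j (c i v)) /\
  (forall i v, (1 <= i <= n)%N -> c i (c i v) = - v) /\
  (forall i j v, (1 <= i <= n.-1)%N -> (1 <= j <= n)%N -> j <> i -> j <> i.+1 ->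
     T i (c j v) = c j (T i v)) /\
  (forall i v, (1 <= i <= n.-1)%N -> T i (c i v) = c i.+1 (T i v)) /\
  (forall i v, (1 <= i <= n.-1)%N ->
     T i (c i.+1 v) + c i.+1 v = c i (T i v) + c i v).

(* eps spans a copy of S_I inside V (as H_n(0)-module). *)
Definition S_I_vector (n : nat) (I : seq nat) (V : lmodType CC)
    (T : nat -> V -> V) (eps : V) : Prop :=
  forall j, (1 <= j <= n.-1)%N ->
    T j eps = (if j \in des I then - eps else 0).

From HB Require Import structures.
From mathcomp Require Import all_boot all_order all_algebra.
From mathcomp Require Import finmap complex Rstruct.
From Stdlib Require Reals.
From mathcomp Require Import zify.
Import GRing.Theory.
Local Open Scope ring_scope.

Set Implicit Arguments.
Unset Strict Implicit.
Unset Printing Implicit Defensive.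

(* Write c_D eps = c_A (c_X (c_B eps)), where A, X, B are the parts of D below
   i, inside {i, i+1} and above i+1.  T_i commutes with c_A and c_B, so
   T_i (c_B eps) = lambda c_B eps with lambda = -1 or 0 according as i is a
   descent of I, and everything reduces to computing T_i on c_X w for the four
   possible X, using T_i c_i = c_{i+1} T_i and (T_i + 1) c_{i+1} = c_i (T_i + 1).
   Each term other than c_D eps that appears is c_{D'} eps for a cover D' of D. *)

Section LinearFunction.
Variables (R : pzRingType) (V : lmodType R) (f : V -> V).
Hypothesis f_linear : linear f.

Lemma linfD u v : f (u + v) = f u + f v.
Proof. by have := f_linear 1 u v; rewrite !scale1r. Qed.

Lemma linf0 : f 0 = 0.
Proof. by apply: (@addrI _ (f 0)); rewrite -linfD !addr0. Qed.

Lemma linfZ a u : f (a *: u) = a *: f u.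
Proof. by rewrite -[a *: u]addr0 f_linear linf0 addr0. Qed.

Lemma linfN u : f (- u) = - f u.
Proof. by rewrite -scaleN1r linfZ scaleN1r. Qed.

Lemma linfB u v : f (u - v) = f u - f v.
Proof. by rewrite linfD linfN. Qed.

End LinearFunction.

Lemma foldr_linear (R : pzRingType) (V : lmodType R) (c : nat -> V -> V) (L : seq nat) :
  (forall j, linear (c j)) -> linear (foldr c ^~ L).
Proof. by move=> c_lin a u v; elim: L => //= j L ->; rewrite c_lin. Qed.

Lemma sorted_sort_fset (E : {fset nat}) : sorted ltn (sort leq (enum_fset E)).
Proof.
rewrite ltn_sorted_uniq_leq sort_uniq fset_uniq /=.
exact: (sort_sorted leq_total).
Qed.

Lemma sort_fset_split (D E : {fset nat}) (i : nat) :
  (forall x, x != i -> x != i.+1 -> (x \in E) = (x \in D)) ->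
  sort leq (enum_fset E) =
    [seq k <- sort leq (enum_fset D) | (k < i)%N]
    ++ [seq k <- [:: i; i.+1] | k \in E]
    ++ [seq k <- sort leq (enum_fset D) | (i.+1 < k)%N].
Proof.
move=> agree; apply: (irr_sorted_eq ltn_trans ltnn (sorted_sort_fset E)).
  have sX : sorted ltn [seq k <- [:: i; i.+1] | k \in E].
    by apply: (sorted_filter ltn_trans); rewrite /= ltnSn.
  have inX x : x \in [seq k <- [:: i; i.+1] | k \in E] -> (i <= x <= i.+1)%N.
    by rewrite mem_filter !inE => /andP[_ /orP[] /eqP->]; lia.
  rewrite sorted_pairwise; last exact: ltn_trans.
  rewrite !pairwise_cat -!sorted_pairwise; try exact: ltn_trans.
  rewrite sX !(sorted_filter ltn_trans _ (sorted_sort_fset D)) /= !andbT.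
  apply/andP; split; apply/allrelP => x y.
  - rewrite mem_filter => /andP[hx _].
    by rewrite mem_cat mem_filter => /orP[/inX|/andP[hy _]]; lia.
  - by move=> /inX hx; rewrite mem_filter => /andP[hy _]; lia.
move=> x; rewrite mem_sort !mem_cat !mem_filter mem_sort !inE.
have [lt_x_i1|gt_x_i1|->] := ltngtP x i.+1.
- have [lt_xi|gt_xi|->] := ltngtP x i; last by rewrite andbT orbF.
  + by rewrite andbF orbF agree //; apply/eqP; lia.
  + by lia.
- rewrite agree; try by apply/eqP; lia.
  by case: (x \in D); rewrite /= ?orbT ?andbF.
- have [-> ->] : (i.+1 < i)%N = false /\ (i.+1 == i) = false by split; [lia | apply/eqP; lia].
  by rewrite orbT andbT orbF.
Qed.

Lemma coverI_neq (I : seq nat) (D' D : {fset nat}) : coverI I D' D -> D' != D.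
Proof.
case=> j E _ _ _ j1E; apply/negP => /eqP/fsetP/(_ j.+1);
  by rewrite !inE eqxx (gtn_eqF (ltnSn j)) /= ?j1E ?(negbTE j1E) ?orbF ?orbT.
Qed.

Definition triangular_expansion (I : seq nat) (V : lmodType CC)
    (T c : nat -> V -> V) (eps : V) (i : nat) (D : {fset nat}) : Prop :=
  exists (s : seq {fset nat}) (beta : {fset nat} -> CC),
    (forall D', D' \in s -> ltI I D' D) /\
    T i (cD c D eps) =
      alpha i I D *: cD c D eps + \sum_(D' <- s) beta D' *: cD c D' eps.

Section TriangularExpansion.
Variables (I : seq nat) (V : lmodType CC) (T c : nat -> V -> V) (eps : V).
Variables (i : nat) (D : {fset nat}).

Lemma triangular_expansion_diag :
  T i (cD c D eps) = alpha i I D *: cD c D eps ->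
  triangular_expansion I T c eps i D.
Proof. by move=> TD; exists [::], (fun=> 0); rewrite big_nil addr0. Qed.

Lemma triangular_expansion_cover (D' : {fset nat}) (b : CC) :
  coverI I D' D ->
  T i (cD c D eps) = alpha i I D *: cD c D eps + b *: cD c D' eps ->
  triangular_expansion I T c eps i D.
Proof.
move=> cov TD; exists [:: D'], (fun=> b); rewrite big_seq1; split=> // E.
rewrite inE => /eqP->; split; last exact/eqP/(coverI_neq cov).
exact: leI_step cov (leI_refl _ _).
Qed.

End TriangularExpansion.

Section HeckeCliffordAction.
Variables (n : nat) (I : seq nat) (V : lmodType CC) (T c : nat -> V -> V).
Variables (eps : V) (i : nat) (D : {fset nat}).
Hypothesis I_sum : sumn I = n.
Hypothesis hcl : HCl_module n T c.
Hypothesis eps_SI : S_I_vector n I T eps.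
Hypothesis i_range : (1 <= i <= n.-1)%N.
Hypothesis D_range : {subset D <= [pred k : nat | (1 <= k <= n)%N]}.

Let c_linear j : linear (c j).
Proof. by case: hcl => _ [cL _]; apply: cL. Qed.

Let c_anticomm j k v : (1 <= j <= n)%N -> (1 <= k <= n)%N -> j <> k ->
  c j (c k v) = - c k (c j v).
Proof. by case: hcl => _ [_ [_ [_ [_ [cc _]]]]]; apply: cc. Qed.

Let c_sq j v : (1 <= j <= n)%N -> c j (c j v) = - v.
Proof. by case: hcl => _ [_ [_ [_ [_ [_ [c2 _]]]]]]; apply: c2. Qed.

Let T_c j v : (1 <= j <= n)%N -> j <> i -> j <> i.+1 -> T i (c j v) = c j (T i v).
Proof. by case: hcl => _ [_ [_ [_ [_ [_ [_ [Tc _]]]]]]]; apply: Tc. Qed.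

Let T_ci v : T i (c i v) = c i.+1 (T i v).
Proof. by case: hcl => _ [_ [_ [_ [_ [_ [_ [_ [Tci _]]]]]]]]; apply: Tci. Qed.

Let T_ci1 v : T i (c i.+1 v) = c i (T i v) + c i v - c i.+1 v.
Proof.
by case: hcl => _ [_ [_ [_ [_ [_ [_ [_ [_ Tci1]]]]]]]]; rewrite -(Tci1 i v) ?addrK.
Qed.

Lemma T_foldr_c (L : seq nat) (u : V) :
  all (fun k => [&& 1 <= k <= n, k != i & k != i.+1]%N) L ->
  T i (foldr c u L) = foldr c (T i u) L.
Proof.
elim: L => //= k L IH /andP[/and3P[kn /eqP ki /eqP ki1] /IH <-].
exact: T_c.
Qed.

Let lambda : CC := if i \in des I then -1 else 0.
Let below : seq nat := [seq k <- sort leq (enum_fset D) | (k < i)%N].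
Let above : seq nat := [seq k <- sort leq (enum_fset D) | (i.+1 < k)%N].
Let w : V := foldr c eps above.
Let cX (E : {fset nat}) : V := foldr c w [seq k <- [:: i; i.+1] | k \in E].

Let D_part_range (P : pred nat) : (forall k, P k -> (k < i)%N || (i.+1 < k)%N) ->
  all (fun k => [&& 1 <= k <= n, k != i & k != i.+1]%N)
      [seq k <- sort leq (enum_fset D) | P k].
Proof.
move=> Pk; apply/allP => k; rewrite mem_filter mem_sort => /andP[/Pk kP /D_range].
by rewrite inE => kn; apply/and3P; split=> //; apply/eqP; lia.
Qed.

Lemma T_w : T i w = lambda *: w.
Proof.
rewrite T_foldr_c; last by apply: D_part_range => k ->; rewrite orbT.
rewrite eps_SI // /lambda; case: ifP => _.
- by rewrite scaleN1r (linfN (foldr_linear _ c_linear)).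
- by rewrite scale0r (linf0 (foldr_linear _ c_linear)).
Qed.

Lemma cD_factor (E : {fset nat}) :
  (forall x, x != i -> x != i.+1 -> (x \in E) = (x \in D)) ->
  cD c E eps = foldr c (cX E) below.
Proof. by move=> agree; rewrite /cD (sort_fset_split agree) !foldr_cat. Qed.

Lemma T_cD_factor (D' : {fset nat}) (a b : CC) :
  (forall x, x != i -> x != i.+1 -> (x \in D') = (x \in D)) ->
  T i (cX D) = a *: cX D + b *: cX D' ->
  T i (cD c D eps) = a *: cD c D eps + b *: cD c D' eps.
Proof.
move=> agree TX; rewrite !cD_factor // T_foldr_c; last first.
  by apply: D_part_range => k ->.
by rewrite TX (foldr_linear _ c_linear) (linfZ (foldr_linear _ c_linear)).
Qed.

Lemma T_cD_diag (a : CC) :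
  T i (cX D) = a *: cX D -> T i (cD c D eps) = a *: cD c D eps.
Proof.
move=> TX; have := @T_cD_factor D a 0 (fun _ _ _ => erefl).
by rewrite !scale0r !addr0; apply.
Qed.

Lemma T_ci1_eigen (a : CC) (u : V) :
  T i u = a *: u -> T i (c i.+1 u) = (a + 1) *: c i u - c i.+1 u.
Proof. by move=> Tu; rewrite T_ci1 Tu (linfZ (c_linear i)) scalerDl scale1r. Qed.

Let i_neq_i1 : (i == i.+1) = false. Proof. exact: ltn_eqF. Qed.
Let i1_neq_i : (i.+1 == i) = false. Proof. exact: gtn_eqF. Qed.

Lemma expansion_outside : i \notin D -> i.+1 \notin D ->
  triangular_expansion I T c eps i D.
Proof.
move=> /negbTE iD /negbTE i1D.
apply/triangular_expansion_diag/T_cD_diag.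
by rewrite /cX /= iD i1D /= T_w /alpha iD i1D.
Qed.

Lemma expansion_lower : i \in D -> i.+1 \notin D ->
  triangular_expansion I T c eps i D.
Proof.
move=> iD i1D.
have TX : T i (cX D) = lambda *: c i.+1 w.
  by rewrite /cX /= iD (negbTE i1D) /= T_ci T_w (linfZ (c_linear _)).
have alpha0 : alpha i I D = 0 by rewrite /alpha iD (negbTE i1D) /=.
case des_i : (i \in des I).
- pose D' := (D `\ i `|` [fset i.+1])%fset.
  apply: (triangular_expansion_cover (D' := D') (b := -1)).
    by apply: coverI_c; rewrite ?I_sum.
  apply: T_cD_factor.
    by move=> x xi xi1; rewrite /D' !inE xi (negbTE xi1) orbF.
  rewrite TX alpha0 scale0r add0r /lambda des_i /cX /=.
  by rewrite /D' !inE !eqxx i_neq_i1 i1_neq_i /= ?orbT.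
- apply/triangular_expansion_diag/T_cD_diag.
  by rewrite TX alpha0 /lambda des_i !scale0r.
Qed.

Lemma expansion_upper : i \notin D -> i.+1 \in D ->
  triangular_expansion I T c eps i D.
Proof.
move=> iD i1D.
have TX : T i (cX D) = (lambda + 1) *: c i w - c i.+1 w.
  by rewrite /cX /= (negbTE iD) i1D /=; apply: T_ci1_eigen; apply: T_w.
have alphaN1 : alpha i I D = -1.
  by rewrite /alpha iD i1D /=; case: (i \in des I).
case des_i : (i \in des I).
- apply/triangular_expansion_diag/T_cD_diag.
  rewrite TX alphaN1 /lambda des_i addNr scale0r add0r.
  by rewrite /cX /= (negbTE iD) i1D scaleN1r.
- pose D' := (D `\ i.+1 `|` [fset i])%fset.
  apply: (triangular_expansion_cover (D' := D') (b := 1)).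
    by apply: coverI_a; rewrite ?I_sum ?des_i.
  apply: T_cD_factor.
    by move=> x xi xi1; rewrite /D' !inE xi1 (negbTE xi) orbF.
  rewrite TX alphaN1 /lambda des_i add0r !scale1r scaleN1r addrC /cX /=.
  by rewrite (negbTE iD) i1D /D' !inE !eqxx i_neq_i1 i1_neq_i /= ?orbT.
Qed.

Lemma expansion_both : i \in D -> i.+1 \in D ->
  triangular_expansion I T c eps i D.
Proof.
move=> iD i1D; pose D' := (D `\` [fset i; i.+1])%fset.
have [i_le i1_le] : (1 <= i <= n)%N /\ (1 <= i.+1 <= n)%N by split; lia.
have TX : T i (cX D) = - (lambda + 1) *: cX D + 1 *: cX D'.
  rewrite /cX /= iD i1D /D' !inE !eqxx i_neq_i1 i1_neq_i /=.
  rewrite T_ci (T_ci1_eigen T_w) (linfB (c_linear _)) (linfZ (c_linear _)).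
  by rewrite c_sq // opprK scale1r c_anticomm ?scalerN ?scaleNr //; lia.
have alphaE : alpha i I D = - (lambda + 1).
  by rewrite /alpha iD i1D /lambda /=; case: (i \in des I); rewrite ?addNr ?oppr0 ?add0r.
apply: (triangular_expansion_cover (D' := D') (b := 1)).
  by case des_i : (i \in des I); [apply: coverI_d | apply: coverI_b];
    rewrite ?des_i ?I_sum.
rewrite alphaE; apply: T_cD_factor => //.
by move=> x xi xi1; rewrite /D' !inE (negbTE xi) (negbTE xi1).
Qed.

End HeckeCliffordAction.

Theorem mainTheorem7 (n : nat) (I : seq nat) (V : lmodType CC)
    (T c : nat -> V -> V) (eps : V) :
  is_composition n I ->
  HCl_module n T c ->
  S_I_vector n I T eps ->
  forall (i : nat) (D : {fset nat}),
    (1 <= i <= n.-1)%N -> {subset D <= [pred k : nat | (1 <= k <= n)%N]} ->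
    exists (s : seq {fset nat}) (beta : {fset nat} -> CC),
      (forall D', D' \in s -> ltI I D' D) /\
      T i (cD c D eps) =
        alpha i I D *: cD c D eps + \sum_(D' <- s) beta D' *: cD c D' eps.
Proof.
move=> [_ I_sum] hcl eps_SI i D i_range D_range.
have [iD|iD] := boolP (i \in D); have [i1D|i1D] := boolP (i.+1 \in D).
- exact: (expansion_both I_sum hcl eps_SI).
- exact: (expansion_lower I_sum hcl eps_SI).
- exact: (expansion_upper I_sum hcl eps_SI).
- exact: (expansion_outside I_sum hcl eps_SI).
Qed.
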